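(* Let $(A=A_0\oplus A_1,\cdot,\alpha)$ be a super anticommutative Hom-superalgebra. Then for all homogeneous $w,x,y,z\in A$: (i) $\tilde{J}_A$ is super skew-symmetric: $\tilde{J}_A(x,y,z)=-(-1)^{\bar{x}\bar{y}}\tilde{J}_A(y,x,z)=-(-1)^{\bar{y}\bar{z}}\tilde{J}_A(x,z,y)=-(-1)^{\bar{x}(\bar{y}+\bar{z})+\bar{y}\bar{z}}\tilde{J}_A(z,y,x)$; (ii) \begin{align*} &\alpha^2(w)\tilde{J}_A(x,y,z)-(-1)^{\bar{w}(\bar{x}+\bar{y}+\bar{z})}\alpha^2(x)\tilde{J}_A(y,z,w)+(-1)^{(\bar{y}+\bar{z})(\bar{w}+\bar{x})}\alpha^2(y)\tilde{J}_A(z,w,x)-(-1)^{\bar{z}(\bar{x}+\bar{y}+\bar{w})}\alpha^2(z)\tilde{J}_A(w,x,y)\\ &=\tilde{J}_A(wx,\alpha(y),\alpha(z))+(-1)^{(\bar{y}+\bar{z})(\bar{x}+\bar{w})}\tilde{J}_A(yz,\alpha(w),\alpha(x))+(-1)^{\bar{x}(\bar{y}+\bar{z})}\tilde{J}_A(wy,\alpha(z),\alpha(x))\\ &\quad+(-1)^{\bar{z}(\bar{x}+\bar{y})+\bar{w}(\bar{x}+\bar{z})}\tilde{J}_A(zx,\alpha(w),\alpha(y))-(-1)^{\bar{z}(\bar{x}+\bar{y}+\bar{w})}\tilde{J}_A(zw,\alpha(x),\alpha(y))-(-1)^{\bar{w}(\bar{x}+\bar{y}+\bar{z})}\tilde{J}_A(xy,\alpha(z),\alpha(w)).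 \end{align*}
   Context: $\mathbb{K}$ is an algebraically closed field of characteristic $0$. A superspace is a $\mathbb{Z}_2$-graded vector space $A=A_0\oplus A_1$; the parity of a homogeneous $x$ is written $\bar{x}$. A Hom-superalgebra $(A,\cdot,\alpha)$ consists of a superspace $A$, an even bilinear product $(x,y)\mapsto xy$, and an even linear map $\alpha$ with $\alpha(xy)=\alpha(x)\alpha(y)$. It is super anticommutative if $xy=-(-1)^{\bar{x}\bar{y}}yx$ for homogeneous $x,y$. The Hom-super-Jacobian is $\tilde{J}_A(x,y,z)=(xy)\alpha(z)+(-1)^{\bar{x}(\bar{y}+\bar{z})}(yz)\alpha(x)+(-1)^{\bar{z}(\bar{x}+\bar{y})}(zx)\alpha(y)$. *)

From HB Require Import structures.
From mathcomp Require Import all_boot all_order all_algebra.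
Set Implicit Arguments. Unset Strict Implicit. Unset Printing Implicit Defensive.
Import GRing.Theory.
Local Open Scope ring_scope.

(* A superspace A = A_0 (+) A_1 over K is modelled as the product
   A0 * A1 of two K-vector spaces; x is homogeneous of parity p
   (p = false : even, p = true : odd) iff its other component vanishes. *)
Definition homog (K : fieldType) (A0 A1 : lmodType K) (x : A0 * A1) (p : bool)
  : Prop := if p then x.1 = 0 else x.2 = 0.

(* the sign (-1)^n, n a natural number (parities coerced bool -> nat) *)
Definition sgn (K : fieldType) (n : nat) : K := (-1) ^+ n.

Section HomSuper.
Variables (K : fieldType) (A0 A1 : lmodType K).
Local Notation A := (A0 * A1)%type.
Variables (mul : A -> A -> A) (alpha : A -> A).

Definition bilinear_prod : Prop :=
  (forall (a : K) (x y z : A), mul (a *: x + y) z = a *: mul x z + mul y z) /\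
  (forall (a : K) (x y z : A), mul z (a *: x + y) = a *: mul z x + mul z y).

Definition even_prod : Prop :=
  forall (x y : A) (px py : bool), homog x px -> homog y py ->
    homog (mul x y) (addb px py).

Definition even_linear_map : Prop :=
  (forall (a : K) (x y : A), alpha (a *: x + y) = a *: alpha x + alpha y) /\
  (forall (x : A) (p : bool), homog x p -> homog (alpha x) p).

Definition multiplicative : Prop :=
  forall x y : A, alpha (mul x y) = mul (alpha x) (alpha y).

Definition hom_superalgebra : Prop :=
  [/\ bilinear_prod, even_prod, even_linear_map & multiplicative].

Definition super_anticommutative : Prop :=
  forall (x y : A) (px py : bool), homog x px -> homog y py ->
    mul x y = - (sgn K (px * py) *: mul y x).

Definition superJ (px py pz : bool) (x y z : A) : A :=
  mul (mul x y) (alpha z)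
  + sgn K (px * (py + pz)) *: mul (mul y z) (alpha x)
  + sgn K (pz * (px + py)) *: mul (mul z x) (alpha y).

End HomSuper.

From HB Require Import structures.
From mathcomp Require Import all_boot all_order all_algebra.
Set Implicit Arguments.
Unset Strict Implicit.
Import GRing.Theory.
Local Open Scope ring_scope.

(* Up to the sign bookkeeping, J is invariant under cyclic
   permutations of its arguments, and anticommutativity applied termwise turns
   a transposition of its first two arguments into a sign; the two other
   transpositions are composites of these.  For (ii), anticommutativity and
   multiplicativity expand α²(w) J(x,y,z) into three terms of the shape
   ((uv)α(s))α²(t), and J(uv, α(s), α(t)) into two such terms and one term
   (α(u)α(v))(α(s)α(t)).  Both sides of (ii) then consist of the same twelve
   terms of the first shape, while the six terms of the second shape on the
   right cancel in pairs by anticommutativity. *)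

(* A decision procedure for identities in abelian groups: both sides are
   reified over a common list of atoms (maximal subterms not built from
   [+], [-], [0], compared syntactically) and their integer coefficients
   are compared. *)
Inductive zterm := ZVar of nat | ZAdd of zterm & zterm | ZOpp of zterm | ZZero.

Fixpoint zeval {V : zmodType} (env : seq V) (t : zterm) : V :=
  match t with
  | ZVar i => env`_i
  | ZAdd t1 t2 => zeval env t1 + zeval env t2
  | ZOpp t1 => - zeval env t1
  | ZZero => 0
  end.

Fixpoint zcoef (t : zterm) (i : nat) : int :=
  match t with
  | ZVar j => (j == i)%:Z
  | ZAdd t1 t2 => zcoef t1 i + zcoef t2 i
  | ZOpp t1 => - zcoef t1 i
  | ZZero => 0
  end.

Lemma zeval_coef (V : zmodType) (env : seq V) (t : zterm) :
  zeval env t = \sum_(i < size env) env`_i *~ zcoef t i.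
Proof.
elim: t => [j|t1 IH1 t2 IH2|t1 IH1|] /=.
- have [lt_j|le_j] := ltnP j (size env).
    rewrite (bigD1 (Ordinal lt_j)) //= eqxx mulr1z big1 ?addr0 // => i.
    by rewrite -val_eqE /= eq_sym => /negPf->; rewrite mulr0z.
  rewrite nth_default // big1 // => i _.
  rewrite gtn_eqF ?mulr0z //; exact: leq_trans (ltn_ord i) le_j.
- by rewrite IH1 IH2 -big_split; apply: eq_bigr => i _; rewrite mulrzDr.
- by rewrite IH1 -sumrN; apply: eq_bigr => i _; rewrite mulrNz.
- by rewrite big1.
Qed.

Lemma zeval_eq (V : zmodType) (env : seq V) (t1 t2 : zterm) :
  all (fun i => zcoef t1 i == zcoef t2 i) (iota 0 (size env)) ->
  zeval env t1 = zeval env t2.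
Proof.
move=> /allP eq_coef; rewrite !zeval_coef; apply: eq_bigr => i _.
by rewrite (eqP (eq_coef i _)) // mem_iota ltn_ord.
Qed.

Ltac zindex x env :=
  lazymatch env with
  | x :: _ => constr:(0%N)
  | _ :: ?env' => let i := zindex x env' in constr:(i.+1)
  end.

Ltac zsnoc env x :=
  lazymatch env with
  | nil => constr:([:: x])
  | ?y :: ?env' => let env1 := zsnoc env' x in constr:(y :: env1)
  end.

Ltac zreify env t :=
  lazymatch t with
  | ?a + ?b =>
      lazymatch zreify env a with (?ta, ?env1) =>
      lazymatch zreify env1 b with (?tb, ?env2) => constr:((ZAdd ta tb, env2)) end end
  | - ?a => lazymatch zreify env a with (?ta, ?env1) => constr:((ZOpp ta, env1)) end
  | 0 => constr:((ZZero, env))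
  | _ =>
      match constr:(tt) with
      | _ => let i := zindex t env in constr:((ZVar i, env))
      | _ => let i := eval cbv [size] in (size env) in
             let env1 := zsnoc env t in constr:((ZVar i, env1))
      end
  end.

Ltac zmod_eq :=
  lazymatch goal with |- @eq ?V ?a ?b =>
  lazymatch zreify (@nil V) a with (?ta, ?env1) =>
  lazymatch zreify env1 b with (?tb, ?env) =>
    change (zeval env ta = zeval env tb); apply: zeval_eq; vm_compute; reflexivity
  end end end.

Lemma sgn_odd (K : fieldType) (n : nat) : sgn K n = (-1) ^+ odd n.
Proof. by rewrite /sgn signr_odd. Qed.

(* Splits on every boolean in the context, so that each sign becomes [1] or
   [-1]; the [homog] hypotheses are cleared first. *)
Ltac parity_cases :=
  rewrite !sgn_odd ?(oddD, oddM, oddb);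
  repeat match goal with H : homog _ _ |- _ => clear H end;
  repeat match goal with b : bool |- _ => case: b end;
  rewrite /= ?expr0 ?expr1 ?scale1r ?scaleN1r.

Section HomSuperalgebra.

Variables (K : fieldType) (A0 A1 : lmodType K).
Local Notation A := (A0 * A1)%type.
Variables (mul : A -> A -> A) (alpha : A -> A).
Hypothesis hA : hom_superalgebra mul alpha.
Hypothesis anti : super_anticommutative mul.

Local Notation J := (superJ mul alpha).

Lemma mul0l t : mul 0 t = 0.
Proof.
have [[mulDZl _] _ _ _] := hA.
have := mulDZl 1 0 0 t; rewrite !scale1r addr0 => double.
by apply: (addIr (mul 0 t)); rewrite add0r -double.
Qed.

Lemma mulZl a u t : mul (a *: u) t = a *: mul u t.
Proof. by have [[mulDZl _] _ _ _] := hA; rewrite -[a *: u]addr0 mulDZl mul0l addr0. Qed.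

Lemma mulDl u v t : mul (u + v) t = mul u t + mul v t.
Proof. by have [[mulDZl _] _ _ _] := hA; rewrite -[u]scale1r mulDZl !scale1r. Qed.

Lemma mulNl u t : mul (- u) t = - mul u t.
Proof. by rewrite -scaleN1r mulZl scaleN1r. Qed.

Lemma homogD (u v : A) p : homog u p -> homog v p -> homog (u + v) p.
Proof. by case: p => /= -> ->; rewrite addr0. Qed.

Lemma homogZ a (u : A) p : homog u p -> homog (a *: u) p.
Proof. by case: p => /= ->; rewrite scaler0. Qed.

Lemma homog_mul {u v : A} {pu pv : bool} :
  homog u pu -> homog v pv -> homog (mul u v) (pu (+) pv).
Proof. by have [_ even _ _] := hA; apply: even. Qed.

Lemma homog_alpha {u : A} {p : bool} : homog u p -> homog (alpha u) p.
Proof. by have [_ _ [_ even] _] := hA; apply: even. Qed.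

Lemma homog_superJ {x y z : A} {px py pz : bool} :
  homog x px -> homog y py -> homog z pz ->
  homog (J px py pz x y z) (px (+) py (+) pz).
Proof.
move=> hx hy hz; rewrite /superJ.
have homog_term p q r (u v t : A) : homog u p -> homog v q -> homog t r ->
    p (+) q (+) r = px (+) py (+) pz -> homog (mul (mul u v) (alpha t)) (px (+) py (+) pz).
  by move=> hu hv ht <-; apply: homog_mul; [exact: homog_mul | exact: homog_alpha].
apply: homogD; [apply: homogD|]; try apply: homogZ.
- exact: (homog_term px py pz).
- by apply: (homog_term py pz px); rewrite // addbC addbA.
- by apply: (homog_term pz px py); rewrite // -addbA addbC.
Qed.

Lemma superJ_cycle x y z px py pz :
  J px py pz x y z = sgn K (px * (py + pz)) *: J py pz px y z x.
Proof. by rewrite /superJ !scalerDr; parity_cases; zmod_eq. Qed.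

Lemma superJ_swap12 {x y z : A} {px py pz : bool} :
  homog x px -> homog y py -> homog z pz ->
  J px py pz x y z = - (sgn K (px * py) *: J py px pz y x z).
Proof.
move=> hx hy hz; rewrite /superJ (anti hy hx) (anti hx hz) (anti hz hy).
by rewrite !(mulNl, mulZl) !scalerDr; parity_cases; zmod_eq.
Qed.

Lemma superJ_swap13 {x y z : A} {px py pz : bool} :
  homog x px -> homog y py -> homog z pz ->
  J px py pz x y z = - (sgn K (px * (py + pz) + py * pz) *: J pz py px z y x).
Proof.
move=> hx hy hz; rewrite superJ_cycle (superJ_swap12 hy hz hx).
by parity_cases; zmod_eq.
Qed.

Lemma superJ_swap23 {x y z : A} {px py pz : bool} :
  homog x px -> homog y py -> homog z pz ->
  J px py pz x y z = - (sgn K (py * pz) *: J px pz py x z y).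
Proof.
move=> hx hy hz; rewrite (superJ_swap13 hx hy hz) (superJ_cycle x).
by parity_cases; zmod_eq.
Qed.

Definition comb4 (a b c d : A) : A := mul (mul (mul a b) (alpha c)) (alpha (alpha d)).

Definition bal4 (a b c d : A) : A := mul (mul (alpha a) (alpha b)) (mul (alpha c) (alpha d)).

Lemma comb4_swap {a b : A} {pa pb : bool} (c d : A) :
  homog a pa -> homog b pb -> comb4 a b c d = - (sgn K (pa * pb) *: comb4 b a c d).
Proof. by move=> ha hb; rewrite /comb4 (anti ha hb) !(mulNl, mulZl). Qed.

Lemma bal4_swap {a b c d : A} {pa pb pc pd : bool} :
  homog a pa -> homog b pb -> homog c pc -> homog d pd ->
  bal4 a b c d = - (sgn K ((pa (+) pb) * (pc (+) pd)) *: bal4 c d a b).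
Proof.
move=> /homog_alpha ha /homog_alpha hb /homog_alpha hc /homog_alpha hd.
exact: anti (homog_mul ha hb) (homog_mul hc hd).
Qed.

Lemma mul_alpha2_superJ {w x y z : A} {pw px py pz : bool} :
  homog w pw -> homog x px -> homog y py -> homog z pz ->
  mul (alpha (alpha w)) (J px py pz x y z)
  = - (sgn K (pw * (px + py + pz)) *: (comb4 x y z w
       + sgn K (px * (py + pz)) *: comb4 y z x w
       + sgn K (pz * (px + py)) *: comb4 z x y w)).
Proof.
move=> /homog_alpha/homog_alpha hw hx hy hz.
rewrite (anti hw (homog_superJ hx hy hz)) /superJ /comb4 !(mulDl, mulZl).
by parity_cases; zmod_eq.
Qed.

Lemma superJ_mul_alpha {a b c d : A} {pa pb pc pd : bool} :
  homog a pa -> homog b pb -> homog c pc -> homog d pd ->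
  J (pa (+) pb) pc pd (mul a b) (alpha c) (alpha d)
  = comb4 a b c d - bal4 a b c d - sgn K (pc * pd) *: comb4 a b d c.
Proof.
move=> ha hb hc hd; have [_ _ _ alphaM] := hA.
rewrite /superJ alphaM -/(bal4 c d a b) (bal4_swap hc hd ha hb).
rewrite (anti (homog_alpha hd) (homog_mul ha hb)) /comb4 !(mulNl, mulZl).
by parity_cases; zmod_eq.
Qed.

Lemma alpha2_superJ_sum {w x y z : A} {pw px py pz : bool} :
  homog w pw -> homog x px -> homog y py -> homog z pz ->
  mul (alpha (alpha w)) (J px py pz x y z)
  - sgn K (pw * (px + py + pz)) *: mul (alpha (alpha x)) (J py pz pw y z w)
  + sgn K ((py + pz) * (pw + px)) *: mul (alpha (alpha y)) (J pz pw px z w x)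
  - sgn K (pz * (px + py + pw)) *: mul (alpha (alpha z)) (J pw px py w x y)
  =
  J (pw (+) px) py pz (mul w x) (alpha y) (alpha z)
  + sgn K ((py + pz) * (px + pw)) *: J (py (+) pz) pw px (mul y z) (alpha w) (alpha x)
  + sgn K (px * (py + pz)) *: J (pw (+) py) pz px (mul w y) (alpha z) (alpha x)
  + sgn K (pz * (px + py) + pw * (px + pz)) *: J (pz (+) px) pw py (mul z x) (alpha w) (alpha y)
  - sgn K (pz * (px + py + pw)) *: J (pz (+) pw) px py (mul z w) (alpha x) (alpha y)
  - sgn K (pw * (px + py + pz)) *: J (px (+) py) pz pw (mul x y) (alpha z) (alpha w).
Proof.
move=> hw hx hy hz.
rewrite (mul_alpha2_superJ hw hx hy hz) (mul_alpha2_superJ hx hy hz hw).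
rewrite (mul_alpha2_superJ hy hz hw hx) (mul_alpha2_superJ hz hw hx hy).
rewrite (superJ_mul_alpha hw hx hy hz) (superJ_mul_alpha hy hz hw hx).
rewrite (superJ_mul_alpha hw hy hz hx) (superJ_mul_alpha hz hx hw hy).
rewrite (superJ_mul_alpha hz hw hx hy) (superJ_mul_alpha hx hy hz hw).
rewrite (comb4_swap x z hw hy) (comb4_swap w y hz hx).
rewrite (bal4_swap hy hz hw hx) (bal4_swap hz hx hw hy) (bal4_swap hx hy hz hw).
by parity_cases; zmod_eq.
Qed.

End HomSuperalgebra.

Theorem lemma2p5 (K : closedFieldType) (hchar : [pchar K] =i pred0)
  (A0 A1 : lmodType K) (mul : A0 * A1 -> A0 * A1 -> A0 * A1)
  (alpha : A0 * A1 -> A0 * A1)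
  (hA : hom_superalgebra mul alpha) (hanti : super_anticommutative mul) :
  (forall (x y z : A0 * A1) (px py pz : bool),
     homog x px -> homog y py -> homog z pz ->
     let J := superJ mul alpha in
     [/\ J px py pz x y z = - (sgn K (px * py) *: J py px pz y x z),
         J px py pz x y z = - (sgn K (py * pz) *: J px pz py x z y)
       & J px py pz x y z
           = - (sgn K (px * (py + pz) + py * pz) *: J pz py px z y x)]) /\
  (forall (w x y z : A0 * A1) (pw px py pz : bool),
     homog w pw -> homog x px -> homog y py -> homog z pz ->
     let J := superJ mul alpha in
     mul (alpha (alpha w)) (J px py pz x y z)
     - sgn K (pw * (px + py + pz)) *: mul (alpha (alpha x)) (J py pz pw y z w)
     + sgn K ((py + pz) * (pw + px)) *: mul (alpha (alpha y)) (J pz pw px z w x)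
     - sgn K (pz * (px + py + pw)) *: mul (alpha (alpha z)) (J pw px py w x y)
     =
     J (addb pw px) py pz (mul w x) (alpha y) (alpha z)
     + sgn K ((py + pz) * (px + pw)) *: J (addb py pz) pw px (mul y z) (alpha w) (alpha x)
     + sgn K (px * (py + pz)) *: J (addb pw py) pz px (mul w y) (alpha z) (alpha x)
     + sgn K (pz * (px + py) + pw * (px + pz)) *: J (addb pz px) pw py (mul z x) (alpha w) (alpha y)
     - sgn K (pz * (px + py + pw)) *: J (addb pz pw) px py (mul z w) (alpha x) (alpha y)
     - sgn K (pw * (px + py + pz)) *: J (addb px py) pz pw (mul x y) (alpha z) (alpha w)).
Proof.
split=> [x y z px py pz hx hy hz | w x y z pw px py pz hw hx hy hz] J.
  by split; [exact (superJ_swap12 hA hanti hx hy hz)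
            | exact (superJ_swap23 hA hanti hx hy hz)
            | exact (superJ_swap13 hA hanti hx hy hz)].
exact (alpha2_superJ_sum hA hanti hw hx hy hz).
Qed.
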